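(* Let $k>1$ and let $\mathcal{F}_1,\ldots,\mathcal{F}_{k-1}$ be families of finite hypergraphs. Let $\mathcal{F}=\{\mathcal{H}_1\cup\cdots\cup\mathcal{H}_{k-1} : \mathcal{H}_i\in\mathcal{F}_i \text{ for all } i\}$, where the union is taken over hypergraphs $\mathcal{H}_1,\ldots,\mathcal{H}_{k-1}$ on a common vertex set. If $m_k(\mathcal{F}_1),\ldots,m_k(\mathcal{F}_{k-1})<\infty$, then $\chi_{\rm big}(\mathcal{F})\le k$.
   Context: A hypergraph $\mathcal{H}=(V,E)$ consists of a vertex set $V$ and a nonempty family $E$ of nonempty subsets of $V$ (edges). The union of hypergraphs $\mathcal{H}_1,\ldots,\mathcal{H}_{k-1}$ on a common vertex set $V$ is the hypergraph on $V$ whose edge set is the union of their edge sets. A hypergraph is $m$-heavy if all its edges have at least $m$ vertices. A $k$-coloring is a map $V\to\{1,\ldots,k\}$; it is proper if every edge with at least two vertices contains two vertices of different colors, and polychromatic if every edge contains vertices of all $k$ colors. For a family $\mathcal{F}$ of hypergraphs, $m_k(\mathcal{F})$ is the smallest $m$ such that every $m$-heavy hypergraph in $\mathcal{F}$ has a polychromatic $k$-coloring ($\infty$ if none exists), and $\chi_{\rm big}(\mathcal{F})$ is the smallest integer $k$ for which there exists an integer $m$ such that every $m$-heavy hypergraph in $\mathcal{F}$ has a proper $k$-coloring ($\infty$ if no such $k$ exists). *)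

From mathcomp Require Import all_boot.
Set Implicit Arguments. Unset Strict Implicit. Unset Printing Implicit Defensive.

Record hypergraph := Hypergraph { hV : finType; hE : {set {set hV}} }.

Definition is_hypergraph (H : hypergraph) : Prop :=
  hE H != set0 /\ forall e, e \in hE H -> e != set0.

Definition hfamily := hypergraph -> Prop.

Definition family_of_hypergraphs (F : hfamily) : Prop :=
  forall H, F H -> is_hypergraph H.

Definition heavy (m : nat) (H : hypergraph) : Prop :=
  forall e, e \in hE H -> m <= #|e|.

Definition proper_coloring (k : nat) (H : hypergraph) (c : hV H -> 'I_k) : Prop :=
  forall e, e \in hE H -> 2 <= #|e| ->
    exists x, exists y, [/\ x \in e, y \in e & c x != c y].

Definition polychromatic (k : nat) (H : hypergraph) (c : hV H -> 'I_k) : Prop :=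
  forall e, e \in hE H -> forall j : 'I_k, exists2 x, x \in e & c x = j.

(* "m_k(F) <= m": every m-heavy hypergraph in F has a polychromatic k-coloring. *)
Definition mk_le (k : nat) (F : hfamily) (m : nat) : Prop :=
  forall H, F H -> heavy m H -> exists c : hV H -> 'I_k, polychromatic c.

Definition mk_finite (k : nat) (F : hfamily) : Prop := exists m, mk_le k F m.

Definition big_colorable (k : nat) (F : hfamily) : Prop :=
  exists m, forall H, F H -> heavy m H -> exists c : hV H -> 'I_k, proper_coloring c.

(* chi_big(F) <= k : the smallest admissible integer exists and is <= k. *)
Definition chi_big_le (F : hfamily) (k : nat) : Prop :=
  exists2 k', k' <= k & big_colorable k' F.

Definition union_family (n : nat) (Fs : 'I_n -> hfamily) : hfamily :=
  fun H => exists Es : 'I_n -> {set {set hV H}},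
    (forall i, Fs i (@Hypergraph (hV H) (Es i))) /\ hE H = \bigcup_(i < n) Es i.

From mathcomp Require Import all_boot.

Set Implicit Arguments.
Unset Strict Implicit.
Unset Printing Implicit Defensive.

(* Fix polychromatic k-colorings c_1, ..., c_(k-1) of the parts H_i of the
   union, and give each vertex v a color c v different from all c_i v; this is
   possible since only k - 1 colors are excluded.  If e is an edge of H_i and
   y is in e, some x in e has c_i x = c y, so c x <> c_i x = c y and e is not
   monochromatic.  The heaviness threshold is the largest of the m_k(F_i). *)

Lemma heavy_subset (V : finType) (E E' : {set {set V}}) m :
  E' \subset E -> heavy m (Hypergraph E) -> heavy m (Hypergraph E').
Proof. by move=> /subsetP sE'E heavyE e /sE'E; apply: heavyE. Qed.

Lemma mk_le_mono k F m M : m <= M -> mk_le k F m -> mk_le k F M.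
Proof.
move=> le_mM mkF H FH heavyH; apply: mkF => // e eH.
exact: leq_trans le_mM (heavyH e eH).
Qed.

Lemma ord_avoid n k (f : 'I_n -> 'I_k) : n < k -> exists j, forall i, f i != j.
Proof.
move=> lt_nk; have [j fj | codom_full] := pickP [predC codom f].
  by exists j => i; apply: contraNneq fj => <-; rewrite /= codom_f.
suff : #|'I_k| <= size (codom f) by rewrite size_codom !card_ord leqNgt lt_nk.
apply: leq_trans (card_size _); apply/subset_leq_card/subsetP => j _.
by move/negbT: (codom_full j); rewrite negbK.
Qed.

Lemma coloring_avoid (V : finType) n k (cs : 'I_n -> V -> 'I_k) :
  n < k -> exists c : V -> 'I_k, forall v i, cs i v != c v.
Proof.
move=> lt_nk; have (v) : exists j, forall i, cs i v != j by exact: ord_avoid.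
by case/fin_all_exists => c; exists c.
Qed.

Lemma proper_union_avoid n k (H : hypergraph) (Es : 'I_n -> {set {set hV H}})
    (cs : 'I_n -> hV H -> 'I_k) (c : hV H -> 'I_k) :
  hE H = \bigcup_(i < n) Es i ->
  (forall i, @polychromatic k (Hypergraph (Es i)) (cs i)) ->
  (forall v i, cs i v != c v) ->
  proper_coloring c.
Proof.
move=> EH csP c_avoid e; rewrite EH => /bigcupP [i _ eEi] e_ge2.
have [y ye] : exists y, y \in e.
  by apply/set0Pn; rewrite -card_gt0; apply: leq_trans e_ge2.
have [x xe csx] := csP i e eEi (c y).
by exists x, y; split => //; rewrite -csx eq_sym c_avoid.
Qed.

Theorem corollary1 (k : nat) (Fs : 'I_k.-1 -> hfamily) :
  1 < k ->
  (forall i, family_of_hypergraphs (Fs i)) ->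
  (forall i, mk_finite k (Fs i)) ->
  chi_big_le (union_family Fs) k.
Proof.
move=> k_gt1 _ /fin_all_exists [m mP].
exists k => //; exists (\max_(i < k.-1) m i) => H [Es [FsEs EH]] heavyH.
have /fin_all_exists [cs csP] (i) :
    exists cs_i : hV H -> 'I_k, @polychromatic k (Hypergraph (Es i)) cs_i.
  apply: (mk_le_mono (leq_bigmax i) (mP i) (FsEs i)).
  by apply: (heavy_subset (E := hE H)); rewrite // EH (bigcup_sup i).
have [c c_avoid] : exists c : hV H -> 'I_k, forall v i, cs i v != c v.
  by apply: coloring_avoid; rewrite ltn_predL ltnW.
by exists c; apply: proper_union_avoid EH csP c_avoid.
Qed.
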